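(* Let ancillae $A_1,\dots,A_n$ consecutively measure a $d$-dimensional prepared quantum system $Q$. Let $S(Q:A_n)$ be the mutual entropy of $Q$ and $A_n$ in the unamplified state, and let $S(Q:D_n)$ be the mutual entropy of $Q$ and $D_n$ after the measurements have been amplified by detectors $D_1,\dots,D_n$. Then $$S(Q:D_n)\le S(Q:A_n).$$
   Context: $Q$ is $d$-dimensional, initially in $|Q\rangle=\sum_{x_1}\alpha^{(1)}_{x_1}|\widetilde{x}_1\rangle$. Ancilla $A_i$ ($d$-dimensional, basis $\{|x\rangle\}$, initially $|0\rangle$) measures $Q$ in the orthonormal basis $\{|\widetilde{x}_i\rangle\}$ via the unitary $\sum_x|\widetilde{x}_i\rangle\langle\widetilde{x}_i|\otimes U_x$, $U_x|0\rangle=|x\rangle$; with $U^{(i)}_{x_{i-1}x_i}=\langle\widetilde{x}_i|\widetilde{x}_{i-1}\rangle$, the unamplified state after $n$ consecutive measurements is $\sum_{x_1,\dots,x_n}\alpha^{(1)}_{x_1}U^{(2)}_{x_1x_2}\cdots U^{(n)}_{x_{n-1}x_n}|\widetilde{x}_n\rangle_Q|x_1\rangle_{A_1}\cdots|x_n\rangle_{A_n}$. Amplification: each detector $D_i$ (initially $|0\rangle$) copies $A_i$, $|x\rangle_{A_i}|0\rangle_{D_i}\mapsto|x\rangle_{A_i}|x\rangle_{D_i}$. Entropies are von Neumann (log base $d$) of reduced states; $S(X:Y)=S(X)+S(Y)-S(XY)$. *)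

From HB Require Import structures.
From mathcomp Require Import all_boot all_order all_algebra.
From mathcomp Require Import reals exp.
From mathcomp Require Import complex.

Set Implicit Arguments.
Unset Strict Implicit.
Unset Printing Implicit Defensive.

Import Order.TTheory GRing.Theory Num.Theory.
Local Open Scope ring_scope.

Section QuantumDefs.
Variable R : realType.
Local Notation C := R[i].

Definition spectrum (N : nat) (M : 'M[C]_N) : seq C :=
  sval (closed_field_poly_normal (char_poly M)).

(** Von Neumann entropy, logarithm in base [b]:
    S(rho) = - sum_{lambda eigenvalue} lambda log_b lambda
    (eigenvalues of density matrices are real; we take their real part). *)
Definition vN_entropy (b : nat) (N : nat) (M : 'M[C]_N) : R :=
  - \sum_(z <- spectrum M) (complex.Re z * ln (complex.Re z)) / ln (b%:R).

(** Composite system of [k] subsystems, each [d]-dimensional, with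
    computational basis labelled by configurations [{ffun 'I_k -> 'I_d}].
    A (pure) state is an amplitude function on configurations. *)
Definition config (k d : nat) := {ffun 'I_k -> 'I_d}.

Definition restr (k d m : nat) (p : m.-tuple 'I_k) (a : config k d) : config m d :=
  [ffun j => a (tnth p j)].

(** Reduced density matrix (partial trace over the complement of the
    subsystems listed in [p], assumed distinct) of the pure state [psi]. *)
Definition reduced (k d m : nat) (psi : config k d -> C) (p : m.-tuple 'I_k)
  : 'M[C]_(#|{: config m d}|) :=
  \matrix_(i, j)
    \sum_(a : config k d | restr p a == enum_val i)
      \sum_(b : config k d | (restr p b == enum_val j) &&
                             [forall l, (l \notin p) ==> (a l == b l)])
        psi a * (psi b)^*.

Definition ent (k d m : nat) (psi : config k d -> C) (p : m.-tuple 'I_k) : R :=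
  vN_entropy d (reduced psi p).

Definition mutual_entropy (k d : nat) (psi : config k d -> C) (x y : 'I_k) : R :=
  ent psi [tuple x] + ent psi [tuple y] - ent psi [tuple x; y].

(** A square matrix is unitary: B^* B = 1. The columns of such a [B]
    form an orthonormal basis { |x~> = B(., x) } of C^d. *)
Definition unitary (d : nat) (B : 'M[C]_d) : Prop :=
  (map_mx conjc B)^T *m B = 1%:M.

(** Layout: position 0 is Q, position i (1 <= i <= n)
    is A_i. [B i] (i = 1..n) is the unitary whose columns are the orthonormal
    basis |x~_i> = B i (.,x) in which A_i measures Q; [q] is the initial state
    of Q in the computational basis of C^d. With
      alpha_x          = <x~_1|Q>          = sum_j conj(B 1 j x) q_j,
      U^(i)_{x y}      = <x~_i|x~_(i-1)>   (x = x_(i-1), y = x_i),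
    the amplitude of |q>_Q |x_1>..|x_n> is
      alpha_{x_1} U^(2)_{x_1 x_2} ... U^(n)_{x_(n-1) x_n} <q|x~_(x_n)>,
    the Q-factor |x~_(x_n)> being expanded in the computational basis. *)
Definition unamplified (d n : nat) (B : nat -> 'M[C]_d) (q : 'cV[C]_d)
  (c : config n.+1 d) : C :=
  let x := fun i : nat => c (inord i) in
  (\sum_(j < d) (B 1%N j (x 1%N))^* * q j 0) *
  (\prod_(2 <= i < n.+1) \sum_(j < d) (B i j (x i))^* * B i.-1 j (x i.-1)) *
  B n (x 0%N) (x n).

(** Amplified state: detector D_i (position n + i, 1 <= i <= n) copies A_i,
    |x>_{A_i}|0>_{D_i} |-> |x>_{A_i}|x>_{D_i}. *)
Definition amplified (d n : nat) (B : nat -> 'M[C]_d) (q : 'cV[C]_d)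
  (c : config (n + n).+1 d) : C :=
  let y := [ffun i : 'I_n.+1 => c (inord i)] in
  unamplified B q y *
  (\prod_(1 <= i < n.+1) (if c (inord (n + i)) == c (inord i) then 1 else 0)).

End QuantumDefs.

From mathcomp Require Import all_boot all_order all_algebra.
From mathcomp Require Import reals exp.
From mathcomp Require Import complex.
From mathcomp Require Import ring lra zify.

(* The detectors merely copy the ancillas, so the amplified state is the image
   of the unamplified one under the isometry |y> |-> |y>|y_A>.  Hence the
   reduced state of Q is unchanged; the reduced state of D_n equals that of A_n,
   which is already diagonal because the Q-factor |x~_n> runs over an
   orthonormal basis; and the reduced state of Q D_n is the reduced state of
   Q A_n pinched (dephased) in the basis of A_n.  Pinching cannot decrease the
   von Neumann entropy: in eigenbases, the eigenvalues of the pinched state are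
   obtained from the old ones by a doubly stochastic matrix, and x ln x is
   convex.  So S(Q:D_n) = S(Q) + S(A_n) - S(Q D_n) <= S(Q:A_n). *)

Set Implicit Arguments.
Unset Strict Implicit.
Unset Printing Implicit Defensive.

Import Order.TTheory GRing.Theory Num.Theory.
Local Open Scope ring_scope.
Local Open Scope sesquilinear_scope.

Section Spectrum.
Variable R : realType.
Local Notation C := R[i].

Lemma char_poly_conj N (P M : 'M[C]_N) : P \in unitmx ->
  char_poly (invmx P *m M *m P) = char_poly M.
Proof.
move=> P_unit; rewrite /char_poly /char_poly_mx.
have XE : ('X%:M : 'M[{poly C}]_N) =
    map_mx polyC (invmx P) *m 'X%:M *m map_mx polyC P.
  by rewrite -mulmxA -scalar_mxC mulmxA -map_mxM mulVmx // map_mx1 mul1mx.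
rewrite {1}XE !map_mxM -mulmxBl -mulmxBr !det_mulmx !det_map_mx mulrC mulrA.
by rewrite -rmorphM -det_mulmx mulmxV // det1 rmorph1 mul1r.
Qed.

Lemma spectrum_conj_diag N (P : 'M[C]_N) (D : 'rV[C]_N) : P \in unitmx ->
  perm_eq (spectrum (invmx P *m diag_mx D *m P)) [seq D 0 k | k <- enum 'I_N].
Proof.
move=> P_unit; apply: prod_XsubC_eq.
rewrite /spectrum; case: closed_field_poly_normal => s /= charE.
have <- : char_poly (invmx P *m diag_mx D *m P) = \prod_(z <- s) ('X - z%:P).
  by rewrite {1}charE (monicP (char_poly_monic _)) scale1r.
rewrite char_poly_conj // char_poly_trig ?diag_mx_is_trig // big_map big_enum.
by apply: eq_bigr => k _; rewrite mxE eqxx mulr1n.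
Qed.

Lemma big_spectrum_normalmx N (A : 'M[C]_N) (F : C -> R) : A \is normalmx ->
  \sum_(z <- spectrum A) F z = \sum_k F (spectral_diag A 0 k).
Proof.
move=> /orthomx_spectralP A_spectral.
rewrite {1}A_spectral (perm_big _ (spectrum_conj_diag _ (spectral_unit A))).
by rewrite big_map big_enum.
Qed.

End Spectrum.

Section XlnxConvexity.
Variable R : realType.

Lemma xlnx_ge_tangent (l m : R) : 0 <= l -> 0 < m ->
  l * ln m + l - m <= l * ln l.
Proof.
rewrite le_eqVlt => /predU1P[<-|l_gt0] m_gt0.
  by rewrite !mul0r add0r subr_le0 ltW.
have ml_gt0 : 0 < m / l by rewrite divr_gt0.
have : ln (m / l) <= m / l - 1.
  by rewrite -{1}[m / l](subrK 1) addrC; apply: le_ln1Dx; lra.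
rewrite ln_div ?posrE // => /(ler_wpM2l (ltW l_gt0)).
rewrite !mulrBr mulrCA divff ?gt_eqF // mulr1 mulr1.
lra.
Qed.

Lemma xlnx_convex_comb N (w lam : 'I_N -> R) :
  (forall k, 0 <= w k) -> (forall k, 0 <= lam k) -> \sum_k w k = 1 ->
  (\sum_k w k * lam k) * ln (\sum_k w k * lam k)
    <= \sum_k w k * (lam k * ln (lam k)).
Proof.
move=> w_ge0 lam_ge0 w_sum1; set mu := \sum_k w k * lam k.
have wlam_ge0 k : 0 <= w k * lam k by apply: mulr_ge0.
have [mu0|mu_neq0] := eqVneq mu 0.
  have wlam0 := psumr_eq0P (fun k _ => wlam_ge0 k) mu0.
  by rewrite mu0 mul0r big1 // => k _; rewrite mulrA wlam0 // mul0r.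
have mu_gt0 : 0 < mu by rewrite lt_def mu_neq0 sumr_ge0.
apply: (@le_trans _ _ (\sum_k w k * (lam k * ln mu + lam k - mu))).
  rewrite (eq_bigr (fun k => w k * lam k * ln mu + w k * lam k - w k * mu));
    last by move=> k _; ring.
  rewrite !big_split /= -mulr_suml sumrN -mulr_suml w_sum1 mul1r -/mu.
  lra.
by apply: ler_sum => k _; apply/ler_wpM2l/xlnx_ge_tangent.
Qed.

Lemma xlnx_doubly_stochastic N (w : 'I_N -> 'I_N -> R) (lam : 'I_N -> R) :
  (forall j k, 0 <= w j k) -> (forall k, 0 <= lam k) ->
  (forall j, \sum_k w j k = 1) -> (forall k, \sum_j w j k = 1) ->
  \sum_j (\sum_k w j k * lam k) * ln (\sum_k w j k * lam k)
    <= \sum_k lam k * ln (lam k).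
Proof.
move=> w_ge0 lam_ge0 row1 col1.
apply: (@le_trans _ _ (\sum_j \sum_k w j k * (lam k * ln (lam k)))).
  by apply: ler_sum => j _; apply: xlnx_convex_comb.
by rewrite exchange_big; apply: ler_sum => k _; rewrite -mulr_suml col1 mul1r.
Qed.

End XlnxConvexity.

Section ComplexRe.
Variable R : realType.
Local Notation C := R[i].

Lemma Re_sum (I : Type) (r : seq I) (P : pred I) (F : I -> C) :
  complex.Re (\sum_(i <- r | P i) F i) = \sum_(i <- r | P i) complex.Re (F i).
Proof. exact: (raddf_sum (@complex.Re R : Rcomplex R -> R)). Qed.

Lemma Re_ge0 (x : C) : 0 <= x -> 0 <= complex.Re x.
Proof. by rewrite lecE => /andP[]. Qed.

Lemma Re_mul_ge0 (x y : C) : 0 <= x ->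
  complex.Re (x * y) = complex.Re x * complex.Re y.
Proof. by case: x y => [a b] [c e]; rewrite lecE => /andP[/eqP/= -> _] /=; ring. Qed.

End ComplexRe.

Definition psdmx (R : realType) N (A : 'M[R[i]]_N) : Prop :=
  forall u : 'I_N -> R[i], 0 <= \sum_i \sum_j u i * A i j * (u j)^*.

Section Pinching.
Variables (R : realType) (N : nat) (T : finType) (g : 'I_N -> T).
Local Notation C := R[i].
Implicit Types (A P Q : 'M[C]_N) (l m : 'rV[C]_N).

Definition pinchmx A : 'M[C]_N := \matrix_(i, j) ((g i == g j)%:R * A i j).

Lemma pinchmx_selfadjoint A : A^t* = A -> (pinchmx A)^t* = pinchmx A.
Proof.
move=> /matrixP selfadjA; apply/matrixP => i j; have := selfadjA i j.
by rewrite !mxE rmorphM /= conjC_nat eq_sym => ->.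
Qed.

Lemma conj_diag_mxE P l i j :
  (P^t* *m diag_mx l *m P) i j = \sum_k (P k i)^* * l 0 k * P k j.
Proof. by rewrite mul_mx_diag !mxE; apply: eq_bigr => k _; rewrite !mxE. Qed.

Lemma unitary_conj_diag_entry P l k : P \is unitarymx ->
  l 0 k = \sum_i \sum_j P k i * (P^t* *m diag_mx l *m P) i j * (P k j)^*.
Proof.
move=> /unitarymxP PPt.
have : P *m (P^t* *m diag_mx l *m P) *m P^t* = diag_mx l.
  by rewrite !mulmxA PPt mul1mx -mulmxA PPt mulmx1.
move/matrixP/(_ k k); rewrite [diag_mx l k k]mxE eqxx mulr1n => <-.
rewrite mxE; under eq_bigr do rewrite mxE mulr_suml.
by rewrite exchange_big; apply: eq_bigr => i _; apply: eq_bigr => j _; rewrite !mxE.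
Qed.

Definition pinch_weight P Q j k : C :=
  \sum_i \sum_i' (g i == g i')%:R * (Q j i * (P k i)^*) * (Q j i' * (P k i')^*)^*.

Lemma pinch_weight_ge0 P Q j k : 0 <= pinch_weight P Q j k.
Proof.
rewrite /pinch_weight; set h := fun i => Q j i * (P k i)^*.
have -> : \sum_i \sum_i' (g i == g i')%:R * h i * (h i')^* =
          \sum_x (\sum_(i | g i == x) h i) * (\sum_(i | g i == x) h i)^*.
  rewrite (partition_big g xpredT) //=; apply: eq_bigr => x _.
  rewrite rmorph_sum mulr_suml; apply: eq_bigr => i /eqP gi.
  rewrite mulr_sumr [RHS]big_mkcond; apply: eq_bigr => i' _.
  by rewrite gi eq_sym; case: (g i' == x); rewrite ?mul1r ?mul0r ?mulr0.
by apply: sumr_ge0 => x _; apply: mul_conjC_ge0.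
Qed.

Lemma pinch_weight_sym P Q j k : pinch_weight P Q j k = pinch_weight Q P k j.
Proof.
rewrite /pinch_weight exchange_big; apply: eq_bigr => i _; apply: eq_bigr => i' _.
by rewrite eq_sym !rmorphM /= !conjCK; ring.
Qed.

Lemma pinch_weight_row_sum P Q j : P \is unitarymx -> Q \is unitarymx ->
  \sum_k pinch_weight P Q j k = 1.
Proof.
move=> /unitarymxP/mulmx1C/matrixP PtP /unitarymxP/matrixP/(_ j j).
rewrite !mxE eqxx mulr1n => QQt.
rewrite -[RHS]QQt /pinch_weight exchange_big; apply: eq_bigr => i _.
rewrite exchange_big (bigD1 i) //= [X in _ + X]big1 ?addr0 => [|i' i'_neq_i].
  have PtPii : \sum_k (P^t*) i k * P k i = 1 by have := PtP i i; rewrite !mxE eqxx.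
  rewrite eqxx -[RHS]mulr1 -[X in _ = _ * X]PtPii mulr_sumr.
  by apply: eq_bigr => k _; rewrite !mxE !rmorphM /= !conjCK; ring.
have PtPii' : \sum_k (P^t*) i k * P k i' = 0.
  by have := PtP i i'; rewrite !mxE eq_sym (negbTE i'_neq_i).
rewrite -[RHS](mulr0 ((g i == g i')%:R * Q j i * (Q j i')^*)).
rewrite -[X in _ = _ * X]PtPii' mulr_sumr.
by apply: eq_bigr => k _; rewrite !mxE !rmorphM /= !conjCK; ring.
Qed.

Lemma pinch_eigenvalue P Q l m j : Q \is unitarymx ->
  pinchmx (P^t* *m diag_mx l *m P) = Q^t* *m diag_mx m *m Q ->
  m 0 j = \sum_k pinch_weight P Q j k * l 0 k.
Proof.
move=> Q_unitary pinchE; rewrite (unitary_conj_diag_entry m j Q_unitary) -pinchE.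
rewrite /pinch_weight; symmetry.
under eq_bigr => k _ do rewrite big_distrl /=.
rewrite exchange_big; apply: eq_bigr => i _.
under eq_bigr => k _ do rewrite big_distrl /=.
rewrite exchange_big; apply: eq_bigr => i' _.
rewrite mxE conj_diag_mxE !mulr_sumr big_distrl /=; apply: eq_bigr => k _.
by rewrite !rmorphM /= !conjCK; ring.
Qed.

Lemma xlnx_spectrum_pinchmx_le A : A^t* = A -> psdmx A ->
  \sum_(z <- spectrum (pinchmx A)) complex.Re z * ln (complex.Re z)
    <= \sum_(z <- spectrum A) complex.Re z * ln (complex.Re z).
Proof.
move=> selfadjA psdA.
have normal_of_selfadjoint (B : 'M[C]_N) : B^t* = B -> B \is normalmx.
  by move=> selfadjB; apply/normalmxP; rewrite selfadjB.
have A_normal := normal_of_selfadjoint _ selfadjA.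
have pinch_normal := normal_of_selfadjoint _ (pinchmx_selfadjoint selfadjA).
set P := spectralmx A; set l := spectral_diag A.
set Q := spectralmx (pinchmx A); set m := spectral_diag (pinchmx A).
have P_unitary : P \is unitarymx := spectral_unitarymx A.
have Q_unitary : Q \is unitarymx := spectral_unitarymx (pinchmx A).
have AE : A = P^t* *m diag_mx l *m P.
  by rewrite -(invmx_unitary P_unitary); apply/orthomx_spectralP; exact: A_normal.
have pinchE : pinchmx A = Q^t* *m diag_mx m *m Q.
  by rewrite -(invmx_unitary Q_unitary); apply/orthomx_spectralP; exact: pinch_normal.
have l_ge0 k : 0 <= l 0 k.
  by rewrite (unitary_conj_diag_entry l k P_unitary) -AE; apply: psdA.
have mE j : m 0 j = \sum_k pinch_weight P Q j k * l 0 k.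
  by apply: pinch_eigenvalue Q_unitary _; rewrite -AE.
rewrite [leLHS](big_spectrum_normalmx _ pinch_normal).
rewrite [leRHS](big_spectrum_normalmx _ A_normal).
under eq_bigr => j _ do rewrite mE Re_sum.
under eq_bigr => j _ do under eq_bigr => k _ do rewrite Re_mul_ge0 ?pinch_weight_ge0 //.
apply: xlnx_doubly_stochastic => [j k|k|j|k].
- exact/Re_ge0/pinch_weight_ge0.
- exact/Re_ge0.
- by rewrite -Re_sum (pinch_weight_row_sum j P_unitary Q_unitary).
- under eq_bigr do rewrite pinch_weight_sym.
  by rewrite -Re_sum (pinch_weight_row_sum k Q_unitary P_unitary).
Qed.

Lemma vN_entropy_le_pinchmx b A : A^t* = A -> psdmx A ->
  vN_entropy b A <= vN_entropy b (pinchmx A).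
Proof.
move=> selfadjA psdA.
rewrite /vN_entropy lerN2 -[leLHS]mulr_suml -[leRHS]mulr_suml.
apply: ler_wpM2r; last exact: xlnx_spectrum_pinchmx_le.
rewrite invr_ge0; have [->|b_gt0] := posnP b; first by rewrite ln0.
by apply: ln_ge0; rewrite ler1n.
Qed.

End Pinching.

Section ReducedState.
Variables (R : realType) (k d m : nat) (psi : config k d -> R[i]).
Variables (p : m.-tuple 'I_k) (splice : config k d -> config m d -> config k d).
Hypothesis spliceP : forall (a : config k d) (y : config m d) (b : config k d),
  (restr p b == y) && [forall l, (l \notin p) ==> (a l == b l)] = (b == splice a y).

Lemma reducedE i j : reduced psi p i j =
  \sum_(a | restr p a == enum_val i) psi a * (psi (splice a (enum_val j)))^*.
Proof.
rewrite mxE; apply: eq_bigr => a _.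
under eq_bigl => b do rewrite spliceP.
by rewrite big_pred1_eq.
Qed.

Lemma restr_splice a y : restr p (splice a y) = y.
Proof. by move: (spliceP a y (splice a y)); rewrite eqxx => /andP[/eqP]. Qed.

Lemma splice_notin a y l : l \notin p -> splice a y l = a l.
Proof.
have /andP[_ /forallP agree] :
    (restr p (splice a y) == y) && [forall l, (l \notin p) ==> (a l == splice a y l)].
  by rewrite spliceP.
by move=> l_notin; have /implyP /(_ l_notin) /eqP := agree l.
Qed.

Lemma splice_restr a : splice a (restr p a) = a.
Proof. by apply/esym/eqP; rewrite -spliceP eqxx; apply/forallP => l; exact/implyP. Qed.

Lemma splice_splice a y z : splice (splice a y) z = splice a z.
Proof.
apply/esym/eqP; rewrite -spliceP restr_splice eqxx /=.
by apply/forallP => l; apply/implyP => l_notin; rewrite !splice_notin.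
Qed.

(* Summing over all configurations [e] counts each environment of [p] once for
   every configuration on [p]. *)
Lemma card_mul_reducedE i j : #|{: config m d}|%:R * reduced psi p i j =
  \sum_e psi (splice e (enum_val i)) * (psi (splice e (enum_val j)))^*.
Proof.
set I := enum_val i; set J := enum_val j.
under [RHS]eq_bigr => e _ do rewrite -[splice e J](splice_splice e I).
rewrite (partition_big (splice^~ I) (fun a => restr p a == I)) /=; last first.
  by move=> e _; rewrite restr_splice.
rewrite reducedE mulr_sumr; apply: eq_bigr => a /eqP restr_a.
rewrite (eq_bigr (fun _ => psi a * (psi (splice a J))^*)); last by move=> e /eqP ->.
rewrite (reindex_onto (splice a) (restr p)) /=; last first.
  by move=> e /eqP <-; rewrite splice_splice splice_restr.
rewrite (eq_bigl xpredT); last first.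
  by move=> y; rewrite splice_splice /I -restr_a splice_restr eqxx restr_splice eqxx.
by rewrite sumr_const mulr_natl.
Qed.

Lemma reduced_selfadjoint : (reduced psi p)^t* = reduced psi p.
Proof.
apply/matrixP => i j; rewrite mxE [_^T _ _]mxE.
have card_neq0 : (#|{: config m d}|%:R : R[i]) != 0.
  by rewrite pnatr_eq0 -lt0n (leq_ltn_trans (leq0n i) (ltn_ord i)).
apply: (mulfI card_neq0); rewrite card_mul_reducedE -conjC_nat -rmorphM.
rewrite card_mul_reducedE rmorph_sum; apply: eq_bigr => e _.
by rewrite rmorphM /= conjCK mulrC.
Qed.

Lemma reduced_psd : psdmx (reduced psi p).
Proof.
move=> u.
have [card0|card_gt0] := posnP #|{: config m d}|.
  rewrite big1 // => i; exfalso.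
  by move: (nat_of_ord i) (ltn_ord i) => x; rewrite card0.
have card_pos : (0 : R[i]) < #|{: config m d}|%:R by rewrite ltr0n.
rewrite -(pmulr_rge0 _ card_pos) mulr_sumr.
have -> : \sum_i #|{: config m d}|%:R * (\sum_j u i * reduced psi p i j * (u j)^*) =
    \sum_e (\sum_i u i * psi (splice e (enum_val i))) *
           (\sum_j u j * psi (splice e (enum_val j)))^*.
  symmetry; under eq_bigr => e _ do rewrite rmorph_sum big_distrl /=.
  rewrite exchange_big /=; apply: eq_bigr => i _.
  under eq_bigr => e _ do rewrite big_distrr /=.
  rewrite exchange_big /= mulr_sumr; apply: eq_bigr => j _.
  rewrite [RHS](_ : _ = u i * (#|{: config m d}|%:R * reduced psi p i j) * (u j)^*);
    last by ring.
  rewrite card_mul_reducedE mulr_sumr big_distrl /=.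
  by apply: eq_bigr => e _; rewrite rmorphM /=; ring.
by apply: sumr_ge0 => e _; apply: mul_conjC_ge0.
Qed.

End ReducedState.

Section Coordinates.
Variables (k d : nat).
Implicit Types (a b : config k d) (x z : 'I_k) (v w : 'I_d).

Definition setc a x v : config k d := [ffun l => if l == x then v else a l].

Lemma setc_at a x v : setc a x v x = v.
Proof. by rewrite ffunE eqxx. Qed.

Lemma setc_other a x v l : l != x -> setc a x v l = a l.
Proof. by rewrite ffunE => /negbTE ->. Qed.

Lemma setc_id a x : setc a x (a x) = a.
Proof. by apply/ffunP => l; rewrite ffunE; case: eqP => // ->. Qed.

Lemma setc_setc a x v w : setc (setc a x v) x w = setc a x w.
Proof. by apply/ffunP => l; rewrite !ffunE; case: eqP. Qed.

Lemma setcC a x z v w : x != z -> setc (setc a z w) x v = setc (setc a x v) z w.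
Proof.
move=> x_neq_z; apply/ffunP => l; rewrite !ffunE; case: eqP => [->|//].
by rewrite (negbTE x_neq_z).
Qed.

Lemma setc_eq a x v : (setc a x v == a) = (v == a x).
Proof. by apply/eqP/eqP => [<-|->]; [rewrite ffunE eqxx | exact: setc_id]. Qed.

Lemma restr1E x b (y : config 1 d) : (restr [tuple x] b == y) = (b x == y ord0).
Proof.
apply/eqP/eqP => [<-|bx]; first by rewrite ffunE (tnth_nth x).
by apply/ffunP => j; rewrite ffunE (ord1 j) (tnth_nth x) bx.
Qed.

Lemma restr2E x z b (y : config 2 d) :
  (restr [tuple x; z] b == y) = (b x == y ord0) && (b z == y ord_max).
Proof.
apply/eqP/andP => [<-|[/eqP bx /eqP bz]]; first by rewrite !ffunE !(tnth_nth x).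
apply/ffunP => j; rewrite ffunE (tnth_nth x).
by case: j => [[|[|//]]] j_lt /=; [rewrite bx | rewrite bz];
  congr (y _); apply: val_inj.
Qed.

Lemma splice1P x a (y : config 1 d) b :
  (restr [tuple x] b == y) && [forall l, (l \notin [tuple x]) ==> (a l == b l)] =
  (b == setc a x (y ord0)).
Proof.
rewrite restr1E; apply/andP/eqP => [[/eqP bx /forallP agree]|->].
  apply/ffunP => l; rewrite ffunE; case: eqP => [->|/eqP l_neq_x] //.
  by have /implyP := agree l; rewrite inE (negbTE l_neq_x) => /(_ isT) /eqP.
rewrite ffunE eqxx; split => //; apply/forallP => l; apply/implyP.
by rewrite inE ffunE => /negbTE ->.
Qed.

Lemma splice2P x z a (y : config 2 d) b : x != z ->
  (restr [tuple x; z] b == y) && [forall l, (l \notin [tuple x; z]) ==> (a l == b l)] =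
  (b == setc (setc a z (y ord_max)) x (y ord0)).
Proof.
move=> x_neq_z; rewrite restr2E.
apply/andP/eqP => [[/andP[/eqP bx /eqP bz] /forallP agree]|->].
  apply/ffunP => l; rewrite !ffunE; case: eqP => [->|/eqP l_neq_x] //.
  case: eqP => [->|/eqP l_neq_z] //.
  have /implyP := agree l; rewrite !inE (negbTE l_neq_x) (negbTE l_neq_z).
  by move=> /(_ isT) /eqP.
rewrite !ffunE eqxx [z == x]eq_sym (negbTE x_neq_z) !eqxx; split => //.
apply/forallP => l; apply/implyP.
by rewrite !inE !ffunE negb_or => /andP[/negbTE -> /negbTE ->].
Qed.

Lemma reduced1E (R : realType) (psi : config k d -> R[i]) x i j :
  reduced psi [tuple x] i j =
  \sum_(a : config k d | a x == enum_val i ord0)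
     psi a * (psi (setc a x (enum_val j ord0)))^*.
Proof.
by rewrite (reducedE psi (splice1P x)); apply: eq_bigl => a; rewrite restr1E.
Qed.

Lemma reduced2E (R : realType) (psi : config k d -> R[i]) x z i j : x != z ->
  reduced psi [tuple x; z] i j =
  \sum_(a : config k d | (a x == enum_val i ord0) && (a z == enum_val i ord_max))
     psi a * (psi (setc (setc a z (enum_val j ord_max)) x (enum_val j ord0)))^*.
Proof.
move=> x_neq_z; rewrite (reducedE psi (fun a y b => splice2P a y b x_neq_z)).
by apply: eq_bigl => a; rewrite restr2E.
Qed.

End Coordinates.

Lemma prodr_if10 (R : pzSemiRingType) (I : Type) (r : seq I) (P : pred I) :
  \prod_(i <- r) (if P i then 1 else 0 : R) = (all P r)%:R.
Proof.
elim: r => [|x r IHr]; first by rewrite big_nil.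
by rewrite big_cons IHr /=; case: (P x); rewrite ?mul1r ?mul0r.
Qed.

Lemma unitary_col_orth (R : realType) d (U : 'M[R[i]]_d) a b : unitary U ->
  \sum_t U t a * (U t b)^* = (b == a)%:R.
Proof.
move=> /matrixP/(_ b a); rewrite !mxE => <-.
by apply: eq_bigr => t _; rewrite !mxE mulrC.
Qed.

Section Measurements.
Variables (R : realType) (d n : nat).
Hypothesis n_gt0 : (0 < n)%N.
Variables (B : nat -> 'M[R[i]]_d) (q : 'cV[R[i]]_d).
Local Notation C := R[i].
Local Notation unamp := (unamplified B q).
Local Notation amp := (amplified B q).
Local Notation posQ := (@inord n 0).
Local Notation posA := (@inord n n).
Local Notation posQ' := (@inord (n + n) 0).
Local Notation posD := (@inord (n + n) (n + n)).

Definition undetect (c : config (n + n).+1 d) : config n.+1 d :=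
  [ffun i : 'I_n.+1 => c (inord i)].

Definition detect (y : config n.+1 d) : config (n + n).+1 d :=
  [ffun l : 'I_(n + n).+1 => y (inord (if (l <= n)%N then val l else (l - n)%N))].

Lemma undetect_detect y : undetect (detect y) = y.
Proof.
apply/ffunP => i; rewrite !ffunE /= inordK; last by have := ltn_ord i; lia.
by rewrite (leq_ord i) inord_val.
Qed.

Lemma all_copiesE (c : config (n + n).+1 d) :
  all (fun i => c (inord (n + i)) == c (inord i)) (index_iota 1 n.+1) =
  (c == detect (undetect c)).
Proof.
apply/allP/eqP => [copies|cE i]; last first.
  rewrite mem_index_iota => i_range.
  rewrite cE !ffunE /= (@inordK (n + n) (n + i)); last lia.
  rewrite (@inordK (n + n) i); last lia.
  have -> : (n + i <= n)%N = false by lia.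
  have -> : (i <= n)%N = true by lia.
  by rewrite addKn.
apply/ffunP => l; have l_lt := ltn_ord l; rewrite !ffunE /=; case: ifP => l_le_n.
  by congr (c _); apply: val_inj; rewrite /= !inordK //; lia.
have lE : (inord (n + (l - n)) : 'I_(n + n).+1) = l.
  by apply: val_inj; rewrite /= inordK; lia.
have lnE : (inord (inord (l - n) : 'I_n.+1) : 'I_(n + n).+1) = inord (l - n).
  by apply: val_inj; rewrite /= !inordK; lia.
transitivity (c (inord (n + (l - n)))); first by rewrite lE.
by rewrite lnE; apply/eqP/copies; rewrite mem_index_iota; lia.
Qed.

Lemma posQ_neq_posA : posQ != posA.
Proof. by apply/eqP => /(congr1 val); rewrite /= !inordK; lia. Qed.

Lemma posA_neq_posQ : posA != posQ.
Proof. by rewrite eq_sym posQ_neq_posA. Qed.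

Lemma posQ'_neq_posD : posQ' != posD.
Proof. by apply/eqP => /(congr1 val); rewrite /= !inordK; lia. Qed.

Lemma detect_posQ y : detect y posQ' = y posQ.
Proof. by rewrite ffunE /= inordK. Qed.

Lemma detect_posD y : detect y posD = y posA.
Proof. by rewrite ffunE /= inordK ?ifN ?addKn //; lia. Qed.

Lemma setc_detect_posQ y v : setc (detect y) posQ' v = detect (setc y posQ v).
Proof.
apply/ffunP => l; rewrite !ffunE.
have [->|l_neq] := eqVneq l posQ'; first by rewrite /= inordK // leq0n eqxx.
have l_gt0 : (0 < l)%N.
  rewrite lt0n; apply: contra l_neq => /eqP l0.
  by apply/eqP/val_inj; rewrite /= inordK.
have := ltn_ord l => l_lt.
by case: ifP => l_le; rewrite ifN //; apply/eqP => /(congr1 val);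
  rewrite /= !inordK; lia.
Qed.

Lemma undetect_setc_posD c v : undetect (setc c posD v) = undetect c.
Proof.
apply/ffunP => i; rewrite !ffunE ifN //; apply/eqP => /(congr1 val).
by rewrite /= !inordK; have := ltn_ord i; lia.
Qed.

Lemma amplifiedE c : amp c = unamp (undetect c) * (c == detect (undetect c))%:R.
Proof. by rewrite /amplified prodr_if10 all_copiesE. Qed.

Lemma amplified_detect y : amp (detect y) = unamp y.
Proof. by rewrite amplifiedE undetect_detect eqxx mulr1. Qed.

Lemma amplified_setc_posD y v :
  amp (setc (detect y) posD v) = unamp y * (v == y posA)%:R.
Proof.
by rewrite amplifiedE !undetect_setc_posD undetect_detect setc_eq detect_posD.
Qed.

Lemma sum_amplified (P : pred (config (n + n).+1 d))
    (F : config (n + n).+1 d -> config (n + n).+1 d) :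
  \sum_(c | P c) amp c * (amp (F c))^* =
  \sum_y (P (detect y))%:R * (unamp y * (amp (F (detect y)))^*).
Proof.
rewrite big_mkcond (bigID (fun c => c == detect (undetect c))) /=.
rewrite [X in _ + X]big1 ?addr0 => [|c /negbTE not_copy]; last first.
  by rewrite amplifiedE not_copy mulr0 mul0r if_same.
rewrite (reindex_onto detect undetect) /= => [|c /eqP <-]; last by [].
rewrite (eq_bigl xpredT) => [|y]; last by rewrite undetect_detect !eqxx.
apply: eq_bigr => y _; rewrite amplified_detect.
by case: (P (detect y)); rewrite ?mul1r ?mul0r.
Qed.

(* The amplitude alpha_{x_1} U^(2)_{x_1 x_2} ... U^(n)_{x_(n-1) x_n} of the
   ancilla record; it does not involve the value of Q. *)
Definition record_amp (y : config n.+1 d) : C :=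
  (\sum_(j < d) (B 1%N j (y (inord 1)))^* * q j 0) *
  \prod_(2 <= i < n.+1)
    \sum_(j < d) (B i j (y (inord i)))^* * B i.-1 j (y (inord i.-1)).

Lemma unamplifiedE y : unamp y = record_amp y * B n (y posQ) (y posA).
Proof. by []. Qed.

Lemma setc_posQ_inord (y : config n.+1 d) t i :
  (0 < i <= n)%N -> setc y posQ t (inord i) = y (inord i).
Proof.
move=> i_range; rewrite ffunE ifN //; apply/eqP => /(congr1 val).
by rewrite /= !inordK; lia.
Qed.

Lemma record_amp_setc_posQ y t : record_amp (setc y posQ t) = record_amp y.
Proof.
rewrite /record_amp setc_posQ_inord; last lia.
congr (_ * _); apply: eq_big_nat => i i_range.
by apply: eq_bigr => j _; rewrite !setc_posQ_inord //; lia.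
Qed.

Lemma sum_setc_posQ (H : config n.+1 d -> C) z :
  \sum_y H y = \sum_(y : config n.+1 d | y posQ == z) \sum_t H (setc y posQ t).
Proof.
rewrite (partition_big (fun y : config n.+1 d => y posQ) xpredT) //= exchange_big /=.
apply: eq_bigr => t _.
rewrite (reindex_onto (fun y => setc y posQ t) (fun y => setc y posQ z)) /=.
  by apply: eq_bigl => y; rewrite setc_setc ffunE eqxx /= setc_eq eqxx eq_sym.
by move=> y /eqP <-; rewrite setc_setc setc_id.
Qed.

Lemma unamplified_posA_decohered (I J : 'I_d) : unitary (B n) ->
  \sum_(y : config n.+1 d)
     (y posA == I)%:R * (unamp y * (unamp (setc y posA J))^*) =
  \sum_(y : config n.+1 d)
     (y posA == I)%:R * (unamp y * (unamp y * (J == y posA)%:R)^*).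
Proof.
move=> Bn_unitary; rewrite !(sum_setc_posQ _ I); apply: eq_bigr => y _.
set a := y posA.
transitivity ((a == I)%:R * (record_amp y * (record_amp (setc y posA J))^*) *
              \sum_t B n t a * (B n t J)^*).
  rewrite mulr_sumr; apply: eq_bigr => t _.
  rewrite !unamplifiedE (setcC _ _ _ posA_neq_posQ) !record_amp_setc_posQ !setc_at.
  by rewrite !(setc_other _ _ posA_neq_posQ) setc_at !rmorphM; ring.
transitivity ((a == I)%:R * (J == a)%:R * (record_amp y * (record_amp y)^*) *
              \sum_t B n t a * (B n t a)^*); last first.
  rewrite mulr_sumr; apply: eq_bigr => t _.
  rewrite unamplifiedE record_amp_setc_posQ setc_at (setc_other _ _ posA_neq_posQ).
  rewrite -/a !rmorphM /=.
  by rewrite conjC_nat; ring.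
rewrite !unitary_col_orth // eqxx mulr1.
have [->|J_neq_a] := eqVneq J a; first by rewrite /a setc_id mulr1n !mulr1.
by rewrite mulr0n !mulr0 mul0r.
Qed.

Lemma reduced_amplified_posQ :
  reduced amp [tuple posQ'] = reduced unamp [tuple posQ].
Proof.
apply/matrixP => i j; rewrite !reduced1E sum_amplified [RHS]big_mkcond /=.
apply: eq_bigr => y _; rewrite detect_posQ setc_detect_posQ amplified_detect.
by case: eqP; rewrite ?mul1r ?mul0r.
Qed.

Lemma reduced_amplified_posD : unitary (B n) ->
  reduced amp [tuple posD] = reduced unamp [tuple posA].
Proof.
move=> Bn_unitary; apply/matrixP => i j.
rewrite !reduced1E sum_amplified [RHS]big_mkcond /=.
under eq_bigr => y _ do rewrite detect_posD amplified_setc_posD.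
rewrite -unamplified_posA_decohered //; apply: eq_bigr => y _.
by case: eqP; rewrite ?mul1r ?mul0r.
Qed.

Lemma reduced_amplified_posQD :
  reduced amp [tuple posQ'; posD] =
  pinchmx (fun i : 'I_#|{: config 2 d}| => (enum_val i : config 2 d) ord_max)
          (reduced unamp [tuple posQ; posA]).
Proof.
apply/matrixP => i j; rewrite [LHS]reduced2E ?posQ'_neq_posD //.
rewrite mxE reduced2E ?posQ_neq_posA //.
rewrite sum_amplified mulr_sumr [RHS]big_mkcond /=; apply: eq_bigr => y _.
rewrite setcC ?posQ'_neq_posD // setc_detect_posQ amplified_setc_posD.
rewrite (setc_other _ _ posA_neq_posQ) detect_posQ detect_posD.
set I0 := enum_val i ord0; set I1 := enum_val i ord_max.
set J0 := enum_val j ord0; set J1 := enum_val j ord_max.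
case: (y posQ == I0); rewrite /= ?mul0r ?mulr0 //.
have [yA|yA_neq] := eqVneq (y posA) I1; last by rewrite /= mul0r.
rewrite yA /= mul1r; have [<-|I1_neq] := eqVneq I1 J1.
  by rewrite -yA setc_id /= !mulr1 mul1r.
by rewrite /= mulr0 rmorph0 mulr0 mul0r.
Qed.

End Measurements.

Theorem theorem4 (R : realType) (d n : nat) (hn : (0 < n)%N)
  (B : nat -> 'M[R[i]]_d) (q : 'cV[R[i]]_d)
  (hB : forall i : nat, (1 <= i <= n)%N -> unitary (B i))
  (hq : \sum_(j < d) q j 0 * (q j 0)^* = 1) :
  mutual_entropy (@amplified R d n B q) (inord 0) (inord (n + n))
  <= mutual_entropy (@unamplified R d n B q) (inord 0) (inord n).
Proof.
have Bn_unitary : unitary (B n) by apply: hB; rewrite hn leqnn.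
have spliceQA := fun (a : config n.+1 d) (y : config 2 d) b =>
  splice2P a y b (posQ_neq_posA hn).
rewrite /mutual_entropy /ent (reduced_amplified_posQ hn).
rewrite (reduced_amplified_posD hn q Bn_unitary) lerD2l lerN2.
rewrite (reduced_amplified_posQD hn); apply: vN_entropy_le_pinchmx.
- exact: reduced_selfadjoint spliceQA.
- exact: reduced_psd spliceQA.
Qed.
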